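(* Let $X$ be a nonempty set, $\circ:X\times X\to X$ a binary operation, and $p,q>0$ constants. Let \[ S:=\Big\{\tfrac{a}{a+b}\ \Big|\ a,b>0 \text{ and there is an operation } *:X\times X\to X \text{ such that every } (\circ,p,q)\text{-convex function is } ( *,a,b)\text{-convex}\Big\}. \] Then $1-S\subseteq S$ (where $1-S=\{1-s\mid s\in S\}$), and $S$ is a dense multiplicative subsemigroup of $[0,1]$ (i.e., $S\subseteq[0,1]$, $st\in S$ whenever $s,t\in S$, and $S$ is dense in $[0,1]$).
   Context: Given a nonempty set $X$, a binary operation $\star:X\times X\to X$ and constants $a,b>0$, a function $f:X\to\mathbb{R}$ is called $(\star,a,b)$-convex if $f(x\star y)\leq a f(x)+b f(y)$ for all $x,y\in X$. *)

From Stdlib Require Import Reals.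
Open Scope R_scope.

Definition op_convex {X : Type} (op : X -> X -> X) (a b : R) (f : X -> R) : Prop :=
  forall x y : X, f (op x y) <= a * f x + b * f y.

Definition Sset {X : Type} (circ : X -> X -> X) (p q : R) (s : R) : Prop :=
  exists a b : R, 0 < a /\ 0 < b /\ s = a / (a + b) /\
    exists star : X -> X -> X,
      forall f : X -> R, op_convex circ p q f -> op_convex star a b f.

(** S contains p/(p+q) (take * := circ).  Swapping the arguments of an
    operation turns (a,b)-convexity into (b,a)-convexity, so S is closed under
    s |-> 1 - s; nesting two operations, x * y := (x *1 y) *2 (y *1 y), shows
    that S is closed under products.  Hence the powers of p/(p+q) in S tend to
    0 and their complements give some u in S arbitrarily close to 1; the powers
    of u descend from u to 0 in steps u^n (1 - u) <= 1 - u, so they come within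
    any eps > 1 - u of every point of [0,1]. *)

From Stdlib Require Import Reals Lra Lia Psatz.
Open Scope R_scope.
Set Implicit Arguments.
Unset Strict Implicit.

Lemma op_convex_flip {X : Type} (star : X -> X -> X) (a b : R) (f : X -> R) :
  op_convex star a b f -> op_convex (fun x y => star y x) b a f.
Proof.
  intros Hf x y. specialize (Hf y x). lra.
Qed.

Lemma op_convex_nest {X : Type} (star1 star2 : X -> X -> X) (a b c d : R)
  (f : X -> R) :
  0 <= c -> 0 <= d ->
  op_convex star1 a b f -> op_convex star2 c d f ->
  op_convex (fun x y => star2 (star1 x y) (star1 y y)) (a * c) (b * c + d * (a + b)) f.
Proof.
  intros hc hd H1 H2 x y.
  pose proof (Rmult_le_compat_l c _ _ hc (H1 x y)) as Hxy.
  pose proof (Rmult_le_compat_l d _ _ hd (H1 y y)) as Hyy.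
  pose proof (H2 (star1 x y) (star1 y y)).
  lra.
Qed.

Section SsetClosure.

Variables (X : Type) (circ : X -> X -> X) (p q : R).

Lemma Sset_base : 0 < p -> 0 < q -> Sset circ p q (p / (p + q)).
Proof.
  intros hp hq. exists p, q. repeat split; try lra.
  exists circ. intros f Hf. exact Hf.
Qed.

Lemma Sset_bounds s : Sset circ p q s -> 0 < s < 1.
Proof.
  intros (a & b & ha & hb & -> & _).
  assert (1 - a / (a + b) = b / (a + b)) by (field; lra).
  pose proof (Rdiv_lt_0_compat a (a + b) ha ltac:(lra)).
  pose proof (Rdiv_lt_0_compat b (a + b) hb ltac:(lra)).
  lra.
Qed.

Lemma Sset_compl s : Sset circ p q s -> Sset circ p q (1 - s).
Proof.
  intros (a & b & ha & hb & -> & star & H).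
  exists b, a. repeat split; try lra.
  - field. lra.
  - exists (fun x y => star y x). intros f Hf. apply op_convex_flip, H, Hf.
Qed.

Lemma Sset_mul s t : Sset circ p q s -> Sset circ p q t -> Sset circ p q (s * t).
Proof.
  intros (a & b & ha & hb & -> & star1 & H1) (c & d & hc & hd & -> & star2 & H2).
  exists (a * c), (b * c + d * (a + b)).
  repeat split.
  - apply Rmult_lt_0_compat; lra.
  - nra.
  - field. split; nra.
  - exists (fun x y => star2 (star1 x y) (star1 y y)). intros f Hf.
    apply op_convex_nest; auto; lra.
Qed.

Lemma Sset_pow s n : Sset circ p q s -> Sset circ p q (s ^ S n).
Proof.
  intros Hs. induction n as [|n IH].
  - rewrite pow_1. exact Hs.
  - apply Sset_mul; assumption.
Qed.

Lemma Sset_near_one eps :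
  0 < p -> 0 < q -> 0 < eps -> exists u, Sset circ p q u /\ 1 - u < eps.
Proof.
  intros hp hq heps.
  pose proof (Sset_base hp hq) as Hs0.
  pose proof (Sset_bounds Hs0) as Bs0.
  destruct (pow_lt_1_zero (p / (p + q)) ltac:(rewrite Rabs_right; lra) eps heps)
    as [N HN].
  specialize (HN (S N) ltac:(lia)).
  pose proof (Sset_bounds (Sset_pow N Hs0)).
  rewrite Rabs_right in HN by lra.
  exists (1 - (p / (p + q)) ^ S N). split.
  - apply Sset_compl, Sset_pow, Hs0.
  - lra.
Qed.

End SsetClosure.

Section PowersInUnitInterval.

Variables (u eps : R).
Hypotheses (hu : 0 < u < 1) (hgap : 1 - u < eps).

Lemma pow_S_bounds n : 0 < u ^ S n <= u.
Proof.
  split.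
  - apply pow_lt; lra.
  - simpl. rewrite <- Rmult_1_r. apply Rmult_le_compat_l; [lra|].
    rewrite <- (pow1 n). apply pow_incr. lra.
Qed.

Lemma pow_approx_below x m : forall n,
  0 <= x <= u ^ S n -> u ^ S (n + m) < eps ->
  exists k, Rabs (u ^ S k - x) < eps.
Proof.
  induction m as [|m IH]; intros n Hx Hsmall.
  - rewrite Nat.add_0_r in Hsmall. exists n.
    rewrite Rabs_right; lra.
  - destruct (Rlt_or_le x (u ^ S (S n))) as [Hlt|Hge].
    + apply (IH (S n)); [lra|]. now replace (S n + m)%nat with (n + S m)%nat by lia.
    + exists n.
      pose proof (pow_S_bounds n).
      assert (u ^ S n - u ^ S (S n) = u ^ S n * (1 - u))
        by (simpl; ring).
      assert (u ^ S n * (1 - u) <= 1 - u) by nra.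
      rewrite Rabs_right; lra.
Qed.

Lemma pow_approx_unit_interval x : 0 <= x <= 1 -> exists k, Rabs (u ^ S k - x) < eps.
Proof.
  intros Hx.
  destruct (Rlt_or_le x u) as [Hlt|Hge].
  - assert (heps : 0 < eps) by lra.
    destruct (pow_lt_1_zero u ltac:(rewrite Rabs_right; lra) eps heps) as [M HM].
    specialize (HM (S M) ltac:(lia)).
    pose proof (pow_S_bounds M).
    rewrite Rabs_right in HM by lra.
    apply (pow_approx_below (m := M) (n := 0%nat)); [rewrite pow_1; lra | exact HM].
  - exists 0%nat. rewrite pow_1, Rabs_left1; lra.
Qed.

End PowersInUnitInterval.

Theorem lemma3p4 (X : Type) (HX : inhabited X) (circ : X -> X -> X) (p q : R)
  (hp : 0 < p) (hq : 0 < q) :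
  (forall s, Sset circ p q s -> Sset circ p q (1 - s)) /\
  (forall s, Sset circ p q s -> 0 <= s <= 1) /\
  (forall s t, Sset circ p q s -> Sset circ p q t -> Sset circ p q (s * t)) /\
  (forall x eps, 0 <= x <= 1 -> 0 < eps ->
     exists s, Sset circ p q s /\ Rabs (s - x) < eps).
Proof.
  split; [apply Sset_compl|].
  split; [intros s Hs; pose proof (Sset_bounds Hs); lra|].
  split; [apply Sset_mul|].
  intros x eps Hx heps.
  destruct (Sset_near_one circ hp hq heps) as (u & Hu & Hgap).
  destruct (pow_approx_unit_interval (Sset_bounds Hu) Hgap Hx) as [k Hk].
  exists (u ^ S k). split; [apply Sset_pow, Hu | exact Hk].
Qed.
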